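(* Let $M$ be a finite abelian group of exponent greater than $2$ and even order, written as $M=C_{2i_1}\times\cdots\times C_{2i_s}\times M_1$ with $M_1$ of odd order, $s\geq1$, $i_j\geq 1$. Then $\mathrm{Aut}(L_M)\cong\mathcal{A}\ltimes_\sigma\mathcal{B}$ and $\mathrm{Half}(L_M)\cong C_2\times(\mathcal{A}\ltimes_\sigma\mathcal{B})$, where $\mathcal{A}\cong S_3\times\mathrm{Aut}(M)$, $\mathcal{B}\cong C_2^{2s}$, and $\sigma:\mathcal{A}\to\mathrm{Aut}(\mathcal{B})$ is the conjugation action $\sigma_\alpha(\beta)=\alpha\beta\alpha^{-1}$ inside $\mathrm{Aut}(L_M)$.
   Context: $C_n$ denotes the cyclic group of order $n$ and $S_3$ the symmetric group on three letters. Let $K=\{1,a,b,c\}$ be the Klein four-group. Set $L_M=K\times M$ with the operation $(A,x)*(B,y)=(AB,xy)$ if $B=1$, and $(A,x)*(B,y)=(AB,x^{-1}y)$ if $B\neq 1$. For $u,v\in M$ with $u^2=v^2=1$, $\alpha_{(u,v)}:K\to M$ is defined by $\alpha_{(u,v)}(1)=1$, $\alpha_{(u,v)}(a)=u$, $\alpha_{(u,v)}(b)=v$, $\alpha_{(u,v)}(c)=uv$. For $f'\in\mathrm{Aut}(K)$, $f''\in\mathrm{Aut}(M)$ define $F^+_{(f',f'',u,v)}(A,x)=(f'(A),f''(x)\alpha_{(u,v)}(A))$. Let $H=\{x\in M:x^2=1\}$, $\mathcal{A}=\{F^+_{(f',f'',1,1)}: f'\in\mathrm{Aut}(K), f''\in\mathrm{Aut}(M)\}$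 and $\mathcal{B}=\{F^+_{(I_K,I_M,x,y)}: x,y\in H\}$, where $I_K,I_M$ are identity maps; both are subgroups of $\mathrm{Aut}(L_M)$. $\mathrm{Half}(L_M)$ is the group of half-automorphisms of $L_M$, i.e. bijections $f$ with $f(XY)\in\{f(X)f(Y),f(Y)f(X)\}$ for all $X,Y$. *)

From mathcomp Require Import all_boot all_order all_algebra all_fingroup all_solvable.
Set Implicit Arguments. Unset Strict Implicit. Unset Printing Implicit Defensive.
Local Open Scope group_scope.

Definition Klein := ('Z_2 * 'Z_2)%type.
Definition ka : Klein := (1%R, 0%R).
Definition kb : Klein := (0%R, 1%R).
Definition kc : Klein := (1%R, 1%R).

Section LM.
Variable gT : finGroupType.

Definition LT := (Klein * gT)%type.

Definition Lmul (X Y : LT) : LT :=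
  (X.1 * Y.1, if Y.1 == 1 then X.2 * Y.2 else X.2^-1 * Y.2).

Definition alphaK (u v : gT) (A : Klein) : gT :=
  if A == 1 then 1 else if A == ka then u else if A == kb then v else u * v.

Definition Fplus (f1 : {perm Klein}) (f2 : {perm gT}) (u v : gT) (X : LT) : LT :=
  (f1 X.1, f2 X.2 * alphaK u v X.1).

Definition Hinv : {set gT} := [set x : gT | x ^+ 2 == 1].

(* the set A (generated group; it is a subgroup by the paper) *)
Definition Aset : {set {perm LT}} :=
  [set p : {perm LT} | [exists f1 in Aut [set: Klein], exists f2 in Aut [set: gT],
     [forall X, p X == Fplus f1 f2 1 1 X]]].
Definition Bset : {set {perm LT}} :=
  [set p : {perm LT} | [exists x in Hinv, exists y in Hinv,
     [forall X, p X == Fplus 1 1 x y X]]].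

Definition Agrp : {group {perm LT}} := <<Aset>>%G.
Definition Bgrp : {group {perm LT}} := <<Bset>>%G.

Definition AutLset : {set {perm LT}} :=
  [set p : {perm LT} | [forall X, forall Y, p (Lmul X Y) == Lmul (p X) (p Y)]].
Definition HalfLset : {set {perm LT}} :=
  [set p : {perm LT} | [forall X, forall Y,
     (p (Lmul X Y) == Lmul (p X) (p Y)) || (p (Lmul X Y) == Lmul (p Y) (p X))]].

Definition AutL : {group {perm LT}} := <<AutLset>>%G.
Definition HalfL : {group {perm LT}} := <<HalfLset>>%G.

End LM.

(* The argument proceeds as follows.
   - Every F^+_(f',f'',u,v) (f', f'' automorphisms, u, v in H) is an
     automorphism of L_M; the map psi inverting the M-coordinate outside the
     fibre over 1 is a half-automorphism commuting with all of them.
   - Conversely (section HalfAutomorphisms), a half-automorphism p induces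
     automorphisms of K and of M and acts on each non-trivial fibre by a
     twisted identity or inversion; a uniform-sign argument shows that p is
     F^+_(f',f'',u,v), possibly preceded by psi, and never by psi when p is
     an automorphism.
   - Hence Aut(L_M) = B A with B /\ A = 1 and A normalising B (the action is
     made explicit in Fperm_conj), and Half(L_M) = <psi> x Aut(L_M).
   - Aut(K) is S_3 acting on the three involutions, giving A = S_3 x Aut(M);
     B is elementary abelian of order |H|^2, and |H| = 2^s by counting
     square roots of 1 along the decomposition of M. *)

From mathcomp Require Import all_boot all_order all_algebra all_fingroup all_solvable.
From mathcomp Require mxabelem.
Local Open Scope group_scope.
Set Implicit Arguments. Unset Strict Implicit. Unset Printing Implicit Defensive.

Lemma klein_cases (A : Klein) : [\/ A = 1, A = ka, A = kb | A = kc].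
Proof.
have : [|| A == 1, A == ka, A == kb | A == kc] by case: A => [[[|[|?]] ?] [[|[|?]] ?]].
by case/or4P => /eqP->; [constructor 1|constructor 2|constructor 3|constructor 4].
Qed.

Lemma kleinC (A B : Klein) : A * B = B * A.
Proof. by case: (klein_cases A) => ->; case: (klein_cases B) => ->; apply/eqP. Qed.

Lemma klein_sqr (A : Klein) : A * A = 1.
Proof. by case: (klein_cases A) => ->; apply/eqP. Qed.

Lemma klein_mul_eq1 (A B : Klein) : (A * B == 1) = (A == B).
Proof. by rewrite -[A == B](inj_eq (mulIg B)) klein_sqr. Qed.

Lemma kleinM :
  (((ka * kb)%g = kc) * ((kb * ka)%g = kc) * ((ka * kc)%g = kb) * ((kc * ka)%g = kb)
   * ((kb * kc)%g = ka) * ((kc * kb)%g = ka))%type.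
Proof. by do !split; apply/eqP. Qed.

Lemma AutTP (T : finGroupType) (f : {perm T}) :
  reflect {morph f : x y / x * y} (f \in Aut [set: T]).
Proof.
rewrite inE; apply: (iffP andP) => [[_ /morphicP fM] x y | fM].
  by rewrite fM ?inE.
by split; [apply/subsetP => x; rewrite inE | apply/morphicP => x y _ _; apply: fM].
Qed.

Lemma morph_mul1 (T : finGroupType) (f : T -> T) : {morph f : x y / x * y} -> f 1 = 1.
Proof. by move=> fM; apply: (mulgI (f 1)); rewrite -fM !mulg1. Qed.

Lemma morph_mulV (T : finGroupType) (f : T -> T) : {morph f : x y / x * y} ->
  {morph f : x / x^-1}.
Proof. by move=> fM x; apply: (mulgI (f x)); rewrite -fM !mulgV (morph_mul1 fM). Qed.

Lemma Aut_eq1 (T : finGroupType) (f : {perm T}) x :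
  f \in Aut [set: T] -> (f x == 1) = (x == 1).
Proof. by move=> /AutTP fM; rewrite -{1}(morph_mul1 fM) (inj_eq perm_inj). Qed.

Lemma HinvE (T : finGroupType) (u : T) : (u \in Hinv T) = (u * u == 1).
Proof. by rewrite inE expgS expg1. Qed.

Section AbelianM.
Variable gT : finGroupType.
Hypothesis cM : forall x y : gT, x * y = y * x.
Local Notation L := (LT gT).
Implicit Types (X Y : L) (x y u v : gT) (A B : Klein).

Lemma mulgCA x y u : x * (y * u) = y * (x * u).
Proof. by rewrite !mulgA [x * y]cM. Qed.
Lemma mulgACA x y u v : x * y * (u * v) = x * u * (y * v).
Proof. by rewrite -!mulgA (mulgCA y). Qed.
Lemma invMgC x y : (x * y)^-1 = x^-1 * y^-1.
Proof. by rewrite invMg cM. Qed.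

Lemma Hinv_inv u : u \in Hinv gT -> u^-1 = u.
Proof. by rewrite HinvE -eq_invg_mul => /eqP. Qed.

Lemma HinvM u v : u \in Hinv gT -> v \in Hinv gT -> u * v \in Hinv gT.
Proof. by rewrite !HinvE => /eqP uu /eqP vv; rewrite mulgACA uu vv mulg1. Qed.

Lemma alphaK11 A : alphaK 1 1 A = 1 :> gT.
Proof. by case: (klein_cases A) => ->; rewrite /alphaK /= ?mulg1. Qed.

Lemma alphaK_mul u v u' v' A :
  alphaK u v A * alphaK u' v' A = alphaK (u * u') (v * v') A.
Proof. by case: (klein_cases A) => ->; rewrite /alphaK /= ?mulg1 // mulgACA. Qed.

Lemma alphaK_Hinv u v A : u \in Hinv gT -> v \in Hinv gT -> alphaK u v A \in Hinv gT.
Proof.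
by move=> Hu Hv; case: (klein_cases A) => ->; rewrite /alphaK /= ?HinvM // HinvE mulg1.
Qed.

Lemma alphaKM u v A B : u \in Hinv gT -> v \in Hinv gT ->
  alphaK u v (A * B) = alphaK u v A * alphaK u v B.
Proof.
rewrite !HinvE => /eqP uu /eqP vv.
case: (klein_cases A) => ->; case: (klein_cases B) => ->;
  rewrite ?mul1g ?mulg1 ?klein_sqr ?kleinM /alphaK /= ?mul1g ?mulg1 //.
- by rewrite mulgA uu mul1g.
- by rewrite [u * v]cM mulgA vv mul1g.
- by rewrite [u * v]cM -mulgA uu mulg1.
- by rewrite -mulgA vv mulg1.
- by rewrite mulgACA uu vv mulg1.
Qed.

Lemma Fplus_inj (f1 : {perm Klein}) (f2 : {perm gT}) u v : injective (Fplus f1 f2 u v).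
Proof.
case=> A x [B y] [/perm_inj eAB]; rewrite -eAB => /mulIg /perm_inj ->.
by rewrite eAB.
Qed.

Definition Fperm f1 f2 u v : {perm L} := perm (@Fplus_inj f1 f2 u v).

Lemma FpermE f1 f2 u v X : Fperm f1 f2 u v X = Fplus f1 f2 u v X.
Proof. by rewrite permE. Qed.

Lemma Fplus_morph (f1 : {perm Klein}) (f2 : {perm gT}) u v :
  f1 \in Aut [set: Klein] -> f2 \in Aut [set: gT] -> u \in Hinv gT -> v \in Hinv gT ->
  {morph Fplus f1 f2 u v : X Y / Lmul X Y}.
Proof.
move=> Af1 Af2 Hu Hv [A x] [B y]; have /AutTP f1M := Af1; have /AutTP f2M := Af2.
rewrite /Fplus /Lmul /= f1M Aut_eq1 // alphaKM //; congr (_, _).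
case: (B == 1); rewrite f2M ?invMg ?(Hinv_inv (alphaK_Hinv A Hu Hv)) ?(morph_mulV f2M).
  by rewrite mulgACA.
by rewrite -!mulgA [RHS]mulgCA (mulgCA (alphaK u v A)).
Qed.

Lemma Fperm1 : Fperm 1 1 1 1 = 1.
Proof. by apply/permP => -[A x]; rewrite FpermE perm1 /Fplus /= alphaK11 !perm1 mulg1. Qed.

Lemma FpermM_A f1 f2 g1 g2 :
  Fperm f1 f2 1 1 * Fperm g1 g2 1 1 = Fperm (f1 * g1) (f2 * g2) 1 1.
Proof.
by apply/permP => -[A x]; rewrite permM !FpermE /Fplus /= !alphaK11 !mulg1 !permM.
Qed.

Lemma FpermM_B u v u' v' :
  Fperm 1 1 u v * Fperm 1 1 u' v' = Fperm 1 1 (u * u') (v * v').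
Proof.
by apply/permP => -[A x]; rewrite permM !FpermE /Fplus /= !perm1 -mulgA alphaK_mul.
Qed.

Lemma Fperm_BA f1 f2 u v : f2 \in Aut [set: gT] ->
  Fperm f1 f2 u v = Fperm 1 1 (f2^-1 u) (f2^-1 v) * Fperm f1 f2 1 1.
Proof.
move=> /AutTP f2M; apply/permP => -[A x].
rewrite permM !FpermE /Fplus /= !perm1 alphaK11 mulg1 f2M.
congr (_, _ * _); case: (klein_cases A) => ->; rewrite /alphaK /= ?permKV //.
  by rewrite (morph_mul1 f2M).
by rewrite f2M !permKV.
Qed.

Definition psi (X : L) : L := (X.1, if X.1 == 1 then X.2 else X.2^-1).

Lemma psiK : involutive psi.
Proof. by case=> A x; rewrite /psi /=; case: (A == 1); rewrite /= ?invgK. Qed.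

Definition psiperm : {perm L} := perm (can_inj psiK).

Lemma psipermE X : psiperm X = psi X. Proof. by rewrite permE. Qed.

Lemma psi_half X Y :
  psi (Lmul X Y) = Lmul (psi X) (psi Y) \/ psi (Lmul X Y) = Lmul (psi Y) (psi X).
Proof.
case: X Y => A x [B y]; rewrite /psi /Lmul /=.
have [-> | nA] := eqVneq A 1; have [-> | nB] := eqVneq B 1;
  rewrite ?mul1g ?mulg1 ?eqxx ?(negbTE nA) ?(negbTE nB).
- by left.
- by right; rewrite invMg invgK.
- by right; rewrite invMg.
rewrite klein_mul_eq1; have [<- | nAB] := eqVneq A B.
  by right; rewrite invgK cM.
by left; rewrite invgK invMgC invgK.
Qed.

Lemma Fplus_psi f1 f2 u v X : f1 \in Aut [set: Klein] -> f2 \in Aut [set: gT] ->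
  u \in Hinv gT -> v \in Hinv gT ->
  Fplus f1 f2 u v (psi X) = psi (Fplus f1 f2 u v X).
Proof.
move=> Af1 /AutTP f2M Hu Hv; case: X => A x; rewrite /psi /Fplus /= (Aut_eq1 _ Af1).
case: (A == 1) => //=.
by rewrite (morph_mulV f2M) invMgC (Hinv_inv (alphaK_Hinv A Hu Hv)).
Qed.

End AbelianM.

(* We fix an element z of M with z^2 <> 1, which
   exists since M has exponent greater than 2.  The fibre {1} x M is mapped
   to itself by an automorphism mu of M; the fibre over each A <> 1 is mapped
   onto the fibre over kap A, via x |-> tw A * mu x or x |-> tw A * (mu x)^-1;
   the choice of sign is the same for all A <> 1, and tw = alpha_(u,v). *)
Section HalfAutomorphisms.
Variable gT : finGroupType.
Hypothesis cM : forall x y : gT, x * y = y * x.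
Variable z : gT.
Hypothesis zz_neq1 : z * z != 1.
Local Notation L := (LT gT).
Implicit Types (X Y : L) (x y u v : gT) (A B : Klein).
Variable p : {perm L}.
Hypothesis p_half : forall X Y,
  p (Lmul X Y) = Lmul (p X) (p Y) \/ p (Lmul X Y) = Lmul (p Y) (p X).

Let mulgCA := mulgCA cM.
Let mulgACA := mulgACA cM.
Let invMgC := invMgC cM.

Lemma Lmul_fibre A x y : Lmul (A, x) (1, y) = (A, x * y) :> L.
Proof. by rewrite /Lmul /= ?eqxx mulg1. Qed.

Lemma Lidem X : Lmul X X = X -> X = (1, 1).
Proof.
case: X => A x; rewrite /Lmul /= klein_sqr => -[<-]; rewrite eqxx => exx.
by congr (_, _); apply: (mulgI x); rewrite exx mulg1.
Qed.

Lemma p11 : p (1, 1) = (1, 1).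
Proof. by apply: Lidem; have := p_half (1, 1) (1, 1); rewrite Lmul_fibre mulg1; case. Qed.

(* Elements of {1} x M with non-trivial square stay in {1} x M, because an
   element outside it squares to the identity. *)
Lemma p_fibre1_sq y : y * y != 1 -> (p (1, y)).1 = 1.
Proof.
move=> yy; apply/eqP/negPn/negP => hne.
have : Lmul (p (1, y)) (p (1, y)) = (1, 1).
  by case: (p (1, y)) hne => B t /= nB; rewrite /Lmul /= (negbTE nB) klein_sqr mulVg.
have sq : p (Lmul (1, y) (1, y)) = Lmul (p (1, y)) (p (1, y)) by case: (p_half (1, y) (1, y)).
by rewrite -sq Lmul_fibre -p11 => /perm_inj [] /eqP; rewrite (negbTE yy).
Qed.

(* Every element of {1} x M is the product of two with non-trivial squares. *)
Lemma p_fibre1 y : (p (1, y)).1 = 1.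
Proof.
have [yy | /negPn/eqP yy] := boolP (y * y != 1); first exact: p_fibre1_sq.
have e : (1, y) = Lmul (1, z) (1, z^-1 * y) :> L by rewrite Lmul_fibre mulKVg.
have zy : (z^-1 * y) * (z^-1 * y) != 1.
  by rewrite mulgACA yy mulg1 -invMg eq_invg1.
by rewrite e; case: (p_half (1, z) (1, z^-1 * y)) => ->;
  rewrite /Lmul /= !p_fibre1_sq // mulg1.
Qed.

Definition mu y := (p (1, y)).2.

Lemma p_fibre1E y : p (1, y) = (1, mu y).
Proof. by have := p_fibre1 y; rewrite /mu; case: (p (1, y)) => B t /= ->. Qed.

Lemma muM : {morph mu : x y / x * y}.
Proof.
move=> x y; have e : (1, x * y) = Lmul (1, x) (1, y) :> L by rewrite Lmul_fibre ?mul1g.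
rewrite {1}/mu e; case: (p_half (1, x) (1, y)) => ->;
  by rewrite !p_fibre1E /Lmul /= ?eqxx // cM.
Qed.

Lemma mu_inj : injective mu.
Proof. by move=> x y e; have := p_fibre1E x; rewrite e -p_fibre1E => /perm_inj [->]. Qed.

Definition muperm : {perm gT} := perm mu_inj.
Lemma mupermE y : muperm y = mu y. Proof. by rewrite permE. Qed.
Lemma mu_Aut : muperm \in Aut [set: gT].
Proof. by apply/AutTP => x y; rewrite !mupermE muM. Qed.

Let mu1 : mu 1 = 1 := morph_mul1 muM.
Let muV : {morph mu : x / x^-1} := morph_mulV muM.

Definition kap A := (p (A, 1)).1.
Definition tw A := (p (A, 1)).2.
Lemma p_A1E A : p (A, 1) = (kap A, tw A). Proof. by rewrite /kap /tw; case: (p (A, 1)). Qed.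

Lemma p_fst A x : (p (A, x)).1 = kap A.
Proof.
rewrite -[x]mul1g -Lmul_fibre.
by case: (p_half (A, 1) (1, x)) => ->; rewrite p_fibre1E p_A1E /Lmul /= ?mulg1 ?mul1g.
Qed.

Lemma kapM : {morph kap : A B / A * B}.
Proof.
move=> A B; have e : (A * B, 1) = Lmul (A, 1) (B, 1) :> L.
  by rewrite /Lmul /=; case: ifP; rewrite ?invg1 mulg1.
by rewrite {1}/kap e; case: (p_half (A, 1) (B, 1)) => ->; rewrite !p_A1E /Lmul //= kleinC.
Qed.

Lemma kap_eq1 A : (kap A == 1) = (A == 1).
Proof.
apply/eqP/eqP => [kA | ->]; last exact: morph_mul1 kapM.
have : p (1, muperm^-1 (tw A)) = p (A, 1) by rewrite p_fibre1E -mupermE permKV p_A1E kA.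
by move/perm_inj => [].
Qed.

Lemma kap_inj : injective kap.
Proof.
move=> A B e; apply/eqP; rewrite -klein_mul_eq1 -kap_eq1 kapM e -kapM.
by rewrite klein_sqr (morph_mul1 kapM).
Qed.

Definition kapperm : {perm Klein} := perm kap_inj.
Lemma kappermE A : kapperm A = kap A. Proof. by rewrite permE. Qed.
Lemma kap_Aut : kapperm \in Aut [set: Klein].
Proof. by apply/AutTP => A B; rewrite !kappermE kapM. Qed.

Lemma pE A x : p (A, x) = (kap A, (p (A, x)).2).
Proof. by rewrite -(p_fst A x); case: (p (A, x)). Qed.

(* On a fibre over A <> 1, p is x |-> tw A * mu x or x |-> tw A * (mu x)^-1
   pointwise, by the half-automorphism condition on (A,1)(1,x). *)
Lemma p_fibre_split A x : A != 1 ->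
  (p (A, x)).2 = tw A * mu x \/ (p (A, x)).2 = tw A * (mu x)^-1.
Proof.
move=> nA; have -> : (A, x) = Lmul (A, 1) (1, x) :> L by rewrite Lmul_fibre mul1g.
case: (p_half (A, 1) (1, x)) => ->; rewrite p_A1E p_fibre1E /Lmul /= ?eqxx; first by left.
by rewrite kap_eq1 (negbTE nA); right; rewrite cM.
Qed.

Lemma p_fibre_right A x y : A != 1 ->
  (p (A, x * y)).2 = (p (A, x)).2 * mu y \/ (p (A, x * y)).2 = (mu y)^-1 * (p (A, x)).2.
Proof.
move=> nA; rewrite -Lmul_fibre.
case: (p_half (A, x) (1, y)) => ->; rewrite (pE A x) p_fibre1E /Lmul /= ?eqxx; first by left.
by rewrite kap_eq1 (negbTE nA); right.
Qed.

Lemma muzz : mu z * mu z != 1.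
Proof. by rewrite -muM -mu1 (inj_eq mu_inj). Qed.

Lemma muzV : (mu z)^-1 != mu z.
Proof. by apply: contra muzz => /eqP e; rewrite -{1}e mulVg. Qed.

(* The pointwise choice of sign is uniform on each fibre: comparing it at z
   and at y through y = z * (z^-1 y) would force (mu z)^2 = 1. *)
Lemma fibre_sign A : A != 1 ->
  (forall x, (p (A, x)).2 = tw A * mu x) \/ (forall x, (p (A, x)).2 = tw A * (mu x)^-1).
Proof.
move=> nA; have ey y : y = z * (z^-1 * y) by rewrite mulKVg.
case: (p_fibre_split z nA) => hzA; [left | right] => y;
  case: (p_fibre_right z (z^-1 * y) nA); rewrite -ey hzA muM muV.
- by move=> ->; rewrite -mulgA mulKVg.
- move=> h; case: (p_fibre_split y nA) => // h2; exfalso; move: muzz.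
  move: h; rewrite h2 invMgC invgK mulgACA [mu z * tw A]cM -mulgA => /mulgI.
  by rewrite mulgCA -{1}[(mu y)^-1]mulg1 => /mulgI <-; rewrite eqxx.
- move=> h; case: (p_fibre_split y nA) => // h2; exfalso; move: muzz.
  move: h; rewrite h2 -!mulgA => /mulgI; rewrite mulgA -{1}[mu y]mul1g => /mulIg e.
  by rewrite -[mu z * mu z]invgK invMg -e invg1 eqxx.
- by move=> ->; rewrite invMg invgK mulgACA mulgV mulg1 cM.
Qed.

(* sgn b t is t or t^-1 according to b; keeps A records which sign occurs
   on the fibre over A. *)
Definition sgn (b : bool) (t : gT) := if b then t else t^-1.
Definition keeps A := (p (A, z)).2 == tw A * mu z.

Lemma p_fibreE A x : A != 1 -> (p (A, x)).2 = tw A * sgn (keeps A) (mu x).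
Proof.
move=> nA; rewrite /keeps; case: (fibre_sign nA) => h; rewrite !h /sgn ?eqxx //.
by rewrite (inj_eq (mulgI _)) (negbTE muzV).
Qed.

Lemma sgn1 b : sgn b 1 = 1. Proof. by case: b; rewrite /sgn ?invg1. Qed.
Lemma sgnV b t : sgn b t^-1 = (sgn b t)^-1. Proof. by case: b. Qed.
Lemma sgnN b t : sgn (~~ b) t = (sgn b t)^-1. Proof. by case: b; rewrite /sgn ?invgK. Qed.

Lemma sgn_muzV b : (sgn b (mu z))^-1 != sgn b (mu z).
Proof. by case: b; rewrite /sgn ?invgK; [exact: muzV | rewrite eq_sym; exact: muzV]. Qed.

Lemma sgn_muzz b : sgn b (mu z) * sgn b (mu z) != 1.
Proof. by case: b; rewrite /sgn ?muzz // -invMg eq_invg1 muzz. Qed.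

Lemma p_cross A B x y : A != 1 -> B != 1 -> A != B ->
  (p (A * B, x^-1 * y)).2 = ((p (A, x)).2)^-1 * (p (B, y)).2 \/
  (p (A * B, x^-1 * y)).2 = ((p (B, y)).2)^-1 * (p (A, x)).2.
Proof.
move=> nA nB nAB.
have -> : (A * B, x^-1 * y) = Lmul (A, x) (B, y) :> L by rewrite /Lmul /= (negbTE nB).
case: (p_half (A, x) (B, y)) => ->; rewrite (pE A x) (pE B y) /Lmul /= kap_eq1.
  by rewrite (negbTE nB); left.
by rewrite (negbTE nA); right.
Qed.

Lemma neqAB_mul A B : A != B -> A * B != 1.
Proof. by rewrite klein_mul_eq1. Qed.

Lemma tw_mul A B : A != 1 -> B != 1 -> A != B -> keeps (A * B) = keeps A ->
  tw (A * B) = (tw A)^-1 * tw B.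
Proof.
move=> nA nB nAB eC; have nC := neqAB_mul nAB.
have := p_cross 1 1 nA nB nAB.
rewrite invg1 mulg1 !p_fibreE // mu1 !sgn1 !mulg1; case=> // h11.
have := p_cross z 1 nA nB nAB.
rewrite mulg1 !p_fibreE // mu1 muV sgn1 mulg1 sgnV eC; case.
  by rewrite invMg cM -mulgA => /mulgI.
by rewrite h11 -mulgA => /mulgI /mulgI /eqP; rewrite (negbTE (sgn_muzV _)).
Qed.

Lemma keeps_mixed A B : A != 1 -> B != 1 -> A != B ->
  keeps (A * B) = keeps A -> keeps B = ~~ keeps A -> False.
Proof.
move=> nA nB nAB eC eB; have nC := neqAB_mul nAB.
have wC := tw_mul nA nB nAB eC.
set U := sgn (keeps A) (mu z).
have wC' : tw (A * B) = (tw B)^-1 * tw A.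
  have := p_cross 1 z nA nB nAB.
  rewrite invg1 mul1g !p_fibreE // mu1 sgn1 mulg1 eC eB sgnN -/U; case.
    by rewrite wC -mulgA => /mulgI /mulgI /eqP; rewrite eq_sym (negbTE (sgn_muzV _)).
  by rewrite invMg invgK cM -mulgA => /mulgI.
have := p_cross z z nA nB nAB.
rewrite mulVg !p_fibreE // mu1 sgn1 mulg1 eB sgnN -/U; case.
  rewrite invMgC mulgACA wC -{1}[(tw A)^-1 * tw B]mulg1 => /mulgI /eqP.
  by rewrite eq_sym -invMg eq_invg1 (negbTE (sgn_muzz _)).
rewrite invMgC invgK mulgACA wC' -{1}[(tw B)^-1 * tw A]mulg1 => /mulgI /eqP.
by rewrite eq_sym (negbTE (sgn_muzz _)).
Qed.

Lemma keeps_const : keeps ka = keeps kb /\ keeps kb = keeps kc.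
Proof.
have := @keeps_mixed ka kb isT isT isT; have := @keeps_mixed kb ka isT isT isT.
have := @keeps_mixed ka kc isT isT isT; rewrite !kleinM.
case: (keeps ka); case: (keeps kb); case: (keeps kc) => m3 m2 m1 //; exfalso;
  first [exact: m1 | exact: m2 | exact: m3].
Qed.

Lemma tw_alpha : [/\ tw ka \in Hinv gT, tw kb \in Hinv gT & tw kc = tw ka * tw kb].
Proof.
have [eab ebc] := keeps_const.
have hab := @tw_mul ka kb isT isT isT; rewrite kleinM in hab.
have {}hab := hab (esym (etrans eab ebc)).
have hac := @tw_mul ka kc isT isT isT; rewrite kleinM in hac; have {}hac := hac (esym eab).
have hca := @tw_mul kc ka isT isT isT; rewrite kleinM in hca; have {}hca := hca ebc.
have aa : tw ka * tw ka = 1.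
  move: hac; rewrite hab mulgA -{1}[tw kb]mul1g => /mulIg e.
  by rewrite -[_ * _]invgK invMg -e invg1.
have bb : tw kb * tw kb = 1.
  by move: hca; rewrite hab invMg invgK -mulgA aa mulg1 => {1}->; rewrite mulVg.
have ia : (tw ka)^-1 = tw ka by apply: (mulgI (tw ka)); rewrite mulgV aa.
by rewrite !HinvE aa bb hab ia.
Qed.

Lemma tw_alphaK A : A != 1 -> tw A = alphaK (tw ka) (tw kb) A.
Proof. by case: (klein_cases A) => -> // _; case: tw_alpha. Qed.

Lemma half_structure X :
  p X = Fplus kapperm muperm (tw ka) (tw kb) (if keeps ka then X else psi X).
Proof.
case: X => A x; have [-> | nA] := eqVneq A 1.
  by rewrite p_fibre1E; case: (keeps ka); rewrite /psi /Fplus /= kappermE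
    (morph_mul1 kapM) mupermE mulg1.
have [eab ebc] := keeps_const.
have sA : keeps A = keeps ka by case: (klein_cases A) nA => -> //; rewrite ?eab ?ebc.
rewrite pE p_fibreE // sA (tw_alphaK nA).
by case: (keeps ka); rewrite /psi /Fplus /sgn /= ?(negbTE nA) kappermE mupermE ?muV cM.
Qed.

Lemma keeps_morph : {morph p : X Y / Lmul X Y} -> keeps ka.
Proof.
move=> pM; rewrite /keeps.
have -> : (ka, z) = Lmul (ka, 1) (1, z) :> L by rewrite Lmul_fibre mul1g.
by rewrite pM p_A1E p_fibre1E /Lmul /= ?eqxx.
Qed.

End HalfAutomorphisms.

Section Groups.
Variable gT : finGroupType.
Hypothesis cM : forall x y : gT, x * y = y * x.
Variable z : gT.
Hypothesis zz_neq1 : z * z != 1.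
Local Notation L := (LT gT).
Implicit Types (X Y : L) (x y u v : gT) (A B : Klein) (p q : {perm L}).

Lemma AutLsetP p : reflect {morph p : X Y / Lmul X Y} (p \in AutLset gT).
Proof.
rewrite inE; apply: (iffP forallP) => [h X Y | h X]; first exact/eqP/(forallP (h X) Y).
by apply/forallP => Y; apply/eqP.
Qed.

Lemma HalfLsetP p : reflect
  (forall X Y, p (Lmul X Y) = Lmul (p X) (p Y) \/ p (Lmul X Y) = Lmul (p Y) (p X))
  (p \in HalfLset gT).
Proof.
rewrite inE; apply: (iffP forallP) => [h X Y | h X].
  by case/orP: (forallP (h X) Y) => /eqP; [left | right].
by apply/forallP => Y; case: (h X Y) => ->; rewrite eqxx ?orbT.
Qed.

Lemma AutL_Half p : p \in AutLset gT -> p \in HalfLset gT.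
Proof. by move/AutLsetP => h; apply/HalfLsetP => X Y; left. Qed.

Lemma AutLE : AutL gT = AutLset gT :> {set _}.
Proof.
apply/gen_set_id/group_setP; split; first by apply/AutLsetP => X Y; rewrite !perm1.
by move=> p q /AutLsetP hp /AutLsetP hq; apply/AutLsetP => X Y; rewrite !permM hp hq.
Qed.

Lemma HalfLE : HalfL gT = HalfLset gT :> {set _}.
Proof.
apply/gen_set_id/group_setP; split; first by apply/HalfLsetP => X Y; left; rewrite !perm1.
move=> p q /HalfLsetP hp /HalfLsetP hq; apply/HalfLsetP => X Y; rewrite !permM.
case: (hp X Y) => ->; [case: (hq (p X) (p Y)) | case: (hq (p Y) (p X))] => ->;
  by [left | right].
Qed.

Lemma AsetP p : reflect
  (exists f1 f2, [/\ f1 \in Aut [set: Klein], f2 \in Aut [set: gT] & p = Fperm f1 f2 1 1])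
  (p \in Aset gT).
Proof.
rewrite inE; apply: (iffP idP).
  case/existsP => f1 /andP [Af1 /existsP [f2 /andP [Af2 /forallP h]]].
  by exists f1, f2; split => //; apply/permP => X; rewrite FpermE; apply/eqP/h.
case=> f1 [f2 [Af1 Af2 ->]]; apply/existsP; exists f1; rewrite Af1 /=.
by apply/existsP; exists f2; rewrite Af2 /=; apply/forallP => X; rewrite FpermE.
Qed.

Lemma BsetP p : reflect
  (exists u v, [/\ u \in Hinv gT, v \in Hinv gT & p = Fperm 1 1 u v]) (p \in Bset gT).
Proof.
rewrite inE; apply: (iffP idP).
  case/existsP => u /andP [Hu /existsP [v /andP [Hv /forallP h]]].
  by exists u, v; split => //; apply/permP => X; rewrite FpermE; apply/eqP/h.
case=> u [v [Hu Hv ->]]; apply/existsP; exists u; rewrite Hu /=.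
by apply/existsP; exists v; rewrite Hv /=; apply/forallP => X; rewrite FpermE.
Qed.

Lemma AgrpE : Agrp gT = Aset gT :> {set _}.
Proof.
apply/gen_set_id/group_setP; split; first by apply/AsetP; exists 1, 1; rewrite !group1 Fperm1.
move=> p q /AsetP [f1 [f2 [Af1 Af2 ->]]] /AsetP [g1 [g2 [Ag1 Ag2 ->]]].
by apply/AsetP; exists (f1 * g1), (f2 * g2); rewrite !groupM // FpermM_A.
Qed.

Lemma BgrpE : Bgrp gT = Bset gT :> {set _}.
Proof.
apply/gen_set_id/group_setP; split.
  by apply/BsetP; exists 1, 1; rewrite HinvE mulg1 eqxx Fperm1.
move=> p q /BsetP [u [v [Hu Hv ->]]] /BsetP [u' [v' [Hu' Hv' ->]]].
by apply/BsetP; exists (u * u'), (v * v'); rewrite !HinvM // FpermM_B.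
Qed.

Lemma Fperm_Aut f1 f2 u v : f1 \in Aut [set: Klein] -> f2 \in Aut [set: gT] ->
  u \in Hinv gT -> v \in Hinv gT -> Fperm f1 f2 u v \in AutLset gT.
Proof.
move=> Af1 Af2 Hu Hv; apply/AutLsetP => X Y; rewrite !FpermE.
exact: Fplus_morph.
Qed.

Lemma AutL_Fperm p : p \in AutLset gT -> exists f1 f2 u v,
  [/\ f1 \in Aut [set: Klein], f2 \in Aut [set: gT], u \in Hinv gT, v \in Hinv gT
    & p = Fperm f1 f2 u v].
Proof.
move=> /[dup] /AutLsetP pM /AutL_Half /HalfLsetP hp.
have [Hu Hv _] := tw_alpha cM zz_neq1 hp.
exists (kapperm cM zz_neq1 hp), (muperm cM zz_neq1 hp), (tw p ka), (tw p kb); split=> //.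
- exact: kap_Aut.
- exact: mu_Aut.
apply/permP => X; rewrite FpermE (half_structure cM zz_neq1 hp X).
by rewrite (keeps_morph cM zz_neq1 hp pM).
Qed.

Lemma HalfL_Fperm p : p \in HalfLset gT -> exists (e : bool) f1 f2 u v,
  [/\ f1 \in Aut [set: Klein], f2 \in Aut [set: gT], u \in Hinv gT, v \in Hinv gT
    & p = (if e then psiperm gT else 1) * Fperm f1 f2 u v].
Proof.
move=> /HalfLsetP hp; have [Hu Hv _] := tw_alpha cM zz_neq1 hp.
exists (~~ keeps z p ka), (kapperm cM zz_neq1 hp), (muperm cM zz_neq1 hp), (tw p ka), (tw p kb).
split=> //; first exact: kap_Aut; first exact: mu_Aut.
apply/permP => X; rewrite permM FpermE (half_structure cM zz_neq1 hp X).
by case: (keeps z p ka); rewrite ?psipermE ?perm1.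
Qed.

Lemma alphaK_Aut f1 f2 u v A : f1 \in Aut [set: Klein] -> f2 \in Aut [set: gT] ->
  u \in Hinv gT -> v \in Hinv gT ->
  f2 (alphaK u v A) =
  alphaK (f2 (alphaK u v (f1^-1 ka))) (f2 (alphaK u v (f1^-1 kb))) (f1 A).
Proof.
move=> Af1 /AutTP f2M Hu Hv; rewrite -{1}(permK f1 A); move: (f1 A) => C.
have /AutTP f1VM : f1^-1 \in Aut [set: Klein] by rewrite groupV.
case: (klein_cases C) => ->; rewrite [RHS]/alphaK /= //.
  by rewrite (morph_mul1 f1VM) /alphaK /= (morph_mul1 f2M).
by rewrite -kleinM f1VM alphaKM // f2M.
Qed.

Lemma Fperm_conj f1 f2 u v : f1 \in Aut [set: Klein] -> f2 \in Aut [set: gT] ->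
  u \in Hinv gT -> v \in Hinv gT ->
  Fperm 1 1 u v ^ Fperm f1 f2 1 1 =
  Fperm 1 1 (f2 (alphaK u v (f1^-1 ka))) (f2 (alphaK u v (f1^-1 kb))).
Proof.
move=> Af1 /[dup] Af2 /AutTP f2M Hu Hv; apply/permP => X.
rewrite -(permKV (Fperm f1 f2 1 1) X); case: ((Fperm f1 f2 1 1)^-1 X) => A x.
rewrite conjgE !permM permK !FpermE /Fplus /= !perm1 !alphaK11 !mulg1 f2M.
by rewrite (alphaK_Aut _ Af1 Af2 Hu Hv).
Qed.

Lemma Aut_Hinv (h : {perm gT}) u : h \in Aut [set: gT] -> u \in Hinv gT -> h u \in Hinv gT.
Proof. by move=> /AutTP hM; rewrite !HinvE => /eqP uu; rewrite -hM uu (morph_mul1 hM). Qed.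

Lemma AutL_BA : AutL gT :=: Bgrp gT * Agrp gT.
Proof.
apply/eqP; rewrite eqEsubset; apply/andP; split.
  apply/subsetP => p; rewrite AutLE => /AutL_Fperm [f1 [f2 [u [v [Af1 Af2 Hu Hv ->]]]]].
  rewrite Fperm_BA // BgrpE AgrpE; apply: mem_mulg.
    by apply/BsetP; exists (f2^-1 u), (f2^-1 v); rewrite !Aut_Hinv // groupV.
  by apply/AsetP; exists f1, f2.
apply: mul_subG; apply/subsetP => p; rewrite ?BgrpE ?AgrpE AutLE.
  by case/BsetP => u [v [Hu Hv ->]]; apply: Fperm_Aut => //; apply: group1.
by case/AsetP => f1 [f2 [Af1 Af2 ->]]; apply: Fperm_Aut; rewrite // HinvE mulg1.
Qed.

Lemma TI_BA : Bgrp gT :&: Agrp gT = 1.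
Proof.
apply/trivgP/subsetP => p; rewrite inE BgrpE AgrpE.
case/andP => /BsetP [u [v [Hu Hv ->]]] /AsetP [f1 [f2 [_ /AutTP f2M e]]].
have alpha1 A : alphaK u v A = 1.
  have := congr1 (fun q : {perm L} => (q (A, 1)).2) e.
  by rewrite /= !FpermE /Fplus /= perm1 mul1g alphaK11 mulg1 (morph_mul1 f2M).
by move: (alpha1 ka) (alpha1 kb); rewrite /alphaK /= => -> ->; rewrite Fperm1 inE.
Qed.

Lemma normAB : Agrp gT \subset 'N(Bgrp gT).
Proof.
apply/subsetP => a; rewrite inE AgrpE => /AsetP [f1 [f2 [Af1 Af2 ->]]].
apply/subsetP => _ /imsetP [b + ->]; rewrite BgrpE => /BsetP [u [v [Hu Hv ->]]].
rewrite Fperm_conj //; apply/BsetP.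
by exists (f2 (alphaK u v (f1^-1 ka))), (f2 (alphaK u v (f1^-1 kb))); rewrite !Aut_Hinv ?alphaK_Hinv.
Qed.

Lemma nBA : {acts Agrp gT, on group Bgrp gT | 'J}.
Proof. by split; [rewrite astabsJ; exact: normAB | exact: subsetT]. Qed.

Lemma iso_AutL : AutL gT \isog [set: sdprod_by (actby_groupAction nBA)].
Proof.
have actf : {in Bgrp gT & Agrp gT, morph_act (actby_groupAction nBA) 'J
   (idm (Bgrp gT)) (idm (Agrp gT))}.
  by move=> b a Bb Aa /=; rewrite actbyE.
have inj : 'injm (xsdprodm actf).
  by rewrite injm_xsdprodm !injm_idm !morphim_idm // TI_BA eqxx.
rewrite isog_sym; have := sub_isog (A := setT) (subsetT _) inj.
by rewrite im_xsdprodm !morphim_idm // -AutL_BA.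
Qed.

Lemma psi_Half : psiperm gT \in HalfLset gT.
Proof. by apply/HalfLsetP => X Y; rewrite !psipermE; exact: psi_half. Qed.

Lemma psi_notAut : psiperm gT \notin AutLset gT.
Proof.
apply/negP => /AutLsetP h; have := h (ka, 1) (1, z).
rewrite !psipermE /Lmul /psi /= ?mulg1 ?mul1g invg1 mul1g => -[ez].
by move: zz_neq1; rewrite -{1}ez mulVg eqxx.
Qed.

Lemma order_psi : #[psiperm gT] = 2.
Proof.
apply: nt_prime_order => //; first by apply/permP => X; rewrite permM !psipermE psiK perm1.
by apply: contraNneq psi_notAut => ->; rewrite -AutLE group1.
Qed.

Lemma psi_comm p : p \in AutLset gT -> commute p (psiperm gT).
Proof.
case/AutL_Fperm => f1 [f2 [u [v [Af1 Af2 Hu Hv ->]]]].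
by apply/permP => X; rewrite !permM !psipermE !FpermE Fplus_psi.
Qed.

Lemma Half_dprod : <[psiperm gT]> \x AutL gT = HalfL gT.
Proof.
have ti : <[psiperm gT]> :&: AutL gT = 1.
  apply/trivgP/subsetP => q /setIP [].
  rewrite /= cycle2g ?order_psi // !inE => /orP [// | /eqP ->].
  by rewrite AutLE (negbTE psi_notAut).
have cAut : AutL gT \subset 'C(<[psiperm gT]>).
  by apply/subsetP => p; rewrite AutLE cent_cycle => /psi_comm /cent1P.
rewrite dprodE //; apply/eqP; rewrite eqEsubset; apply/andP; split.
  apply: mul_subG; first by rewrite cycle_subG HalfLE psi_Half.
  by apply/subsetP => p; rewrite AutLE HalfLE; exact: AutL_Half.
apply/subsetP => p; rewrite HalfLE => /HalfL_Fperm [e [f1 [f2 [u [v [Af1 Af2 Hu Hv ->]]]]]].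
apply: mem_mulg; first by case: e; [exact: cycle_id | exact: group1].
by rewrite AutLE Fperm_Aut.
Qed.

Lemma iso_HalfL :
  HalfL gT \isog setX [set: 'Z_2] [set: sdprod_by (actby_groupAction nBA)].
Proof.
apply: (isog_dprod Half_dprod (setX_dprod [set: 'Z_2]%G [set: sdprod_by _]%G)).
  rewrite isog_cyclic_card ?cycle_cyclic // -orderE order_psi cardsX cards1 cardsT card_ord.
  by rewrite prime_cyclic // cardsX cards1 cardsT card_ord.
by apply: (isog_trans iso_AutL); exact: isog_set1X.
Qed.
End Groups.

(* Aut(K) is isomorphic to S_3: an automorphism of K fixes 1 and permutes
   the three involutions a, b, c arbitrarily, since the product of two
   distinct involutions is always the third one. *)
Lemma klein_third (P Q R : Klein) : P != 1 -> Q != 1 -> R != 1 ->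
  P != Q -> P != R -> Q != R -> P * Q = R.
Proof.
by case: (klein_cases P) => ->; case: (klein_cases Q) => ->; case: (klein_cases R) => ->;
  rewrite ?kleinM.
Qed.

Definition kinv (i : 'I_3) : Klein :=
  if val i == 0%N then ka else if val i == 1%N then kb else kc.
Definition kidx (A : Klein) : 'I_3 :=
  if A == ka then inord 0 else if A == kb then inord 1 else inord 2.

Lemma kinv_neq1 i : kinv i != 1.
Proof. by case: i => [[|[|[|]]] Hi]. Qed.

Lemma kinvK : cancel kinv kidx.
Proof. by case=> [[|[|[|]]] Hi] //; apply: val_inj; rewrite /= inordK. Qed.

Lemma kidxK A : A != 1 -> kinv (kidx A) = A.
Proof. by case: (klein_cases A) => -> //; rewrite /kidx /kinv /= inordK. Qed.

Definition k3f (s : {perm 'I_3}) (A : Klein) : Klein :=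
  if A == 1 then 1 else kinv (s (kidx A)).

Lemma k3f_inj s : injective (k3f s).
Proof.
move=> A B; rewrite /k3f.
have [-> | nA] := eqVneq A 1; have [-> | nB] := eqVneq B 1 => //.
- by move=> e; move: (kinv_neq1 (s (kidx B))); rewrite -e eqxx.
- by move=> e; move: (kinv_neq1 (s (kidx A))); rewrite e eqxx.
by move/(can_inj kinvK)/perm_inj => e; rewrite -(kidxK nA) -(kidxK nB) e.
Qed.

Definition k3 (s : {perm 'I_3}) : {perm Klein} := perm (@k3f_inj s).

Lemma k3E s A : k3 s A = k3f s A. Proof. by rewrite permE. Qed.

Lemma k3_eq1 s A : (k3 s A == 1) = (A == 1).
Proof.
by rewrite k3E /k3f; case: ifP => _; rewrite ?eqxx //; apply/negbTE/kinv_neq1.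
Qed.

Lemma k3_Aut s : k3 s \in Aut [set: Klein].
Proof.
apply/AutTP => A B.
have [-> | nA] := eqVneq A 1; first by rewrite (eqP (k3_eq1 s 1)) ?eqxx // !mul1g.
have [-> | nB] := eqVneq B 1; first by rewrite (eqP (k3_eq1 s 1)) ?eqxx // !mulg1.
have [<- | nAB] := eqVneq A B; first by rewrite !klein_sqr; apply/eqP; rewrite k3_eq1.
have nC : A * B != 1 by rewrite klein_mul_eq1.
have nAC : A != A * B by apply: contra nB => /eqP e; rewrite -(mulKg A B) -e mulVg.
have nBC : B != A * B by apply: contra nA => /eqP e; rewrite -(mulgK B A) -e mulgV.
by apply/esym/klein_third; rewrite ?k3_eq1 ?(inj_eq perm_inj).
Qed.

Lemma k3M : {morph k3 : s t / s * t}.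
Proof.
move=> s t; apply/permP => A; rewrite permM !k3E /k3f.
by have [// | nA] := eqVneq A 1; rewrite (negbTE (kinv_neq1 _)) kinvK permM.
Qed.

Lemma k3_inj : injective k3.
Proof.
move=> s t e; apply/permP => i; apply: (can_inj kinvK).
have := congr1 (fun f : {perm Klein} => f (kinv i)) e.
by rewrite /= !k3E /k3f (negbTE (kinv_neq1 i)) kinvK.
Qed.

Lemma k3_onto (f : {perm Klein}) : f \in Aut [set: Klein] -> exists s, k3 s = f.
Proof.
move=> Af; have f_neq1 i : f (kinv i) != 1 by rewrite Aut_eq1 // kinv_neq1.
have inj : injective (fun i => kidx (f (kinv i))).
  by move=> i j /(congr1 kinv); rewrite !kidxK // => /perm_inj /(can_inj kinvK).
exists (perm inj); apply/permP => A; rewrite k3E /k3f.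
have [-> | nA] := eqVneq A 1; first by apply/esym/eqP; rewrite Aut_eq1.
by rewrite permE (kidxK nA) kidxK // Aut_eq1.
Qed.

Section AIso.
Variable gT : finGroupType.
Local Notation L := (LT gT).

Definition phiA (sf : {perm 'I_3} * {perm gT}) : {perm L} := Fperm (k3 sf.1) sf.2 1 1.

Lemma phiAM : {in [set: {perm 'I_3} * {perm gT}] &, {morph phiA : x y / x * y}}.
Proof. by move=> [s g] [t h] _ _; rewrite /phiA /= k3M FpermM_A. Qed.

Canonical phiA_morph := Morphism phiAM.

Lemma phiA_inj : 'injm phiA_morph.
Proof.
apply/injmP => [[s g] [t h]] _ _ /= e; rewrite /phiA /= in e.
have eg : g = h.
  apply/permP => x; have := congr1 (fun q : {perm L} => (q (1, x)).2) e.
  by rewrite /= !FpermE /Fplus /= !mulg1.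
have ek : k3 s = k3 t.
  apply/permP => A; have := congr1 (fun q : {perm L} => (q (A, 1)).1) e.
  by rewrite /= !FpermE /Fplus /=.
by rewrite eg (k3_inj ek).
Qed.

Lemma iso_A : Agrp gT \isog setX [set: {perm 'I_3}] (Aut [set: gT]).
Proof.
rewrite isog_sym.
have := sub_isog (A := setX [set: {perm 'I_3}] (Aut [set: gT])) (subsetT _) phiA_inj.
rewrite morphimEsub ?subsetT //; congr (_ \isog _); apply/setP => p.
rewrite AgrpE; apply/imsetP/AsetP.
  by case=> [[s g]] /setXP [_ Ag] ->; exists (k3 s), g; rewrite k3_Aut.
case=> f1 [f2 [Af1 Af2 ->]]; have [s <-] := k3_onto Af1.
by exists (s, f2); rewrite // inE /= Af2 inE.
Qed.
End AIso.

Section BIso.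
Variable gT : finGroupType.
Hypothesis cM : forall x y : gT, x * y = y * x.
Local Notation L := (LT gT).

Lemma card_B : #|Bgrp gT| = (#|Hinv gT| * #|Hinv gT|)%N.
Proof.
have -> : Bgrp gT = [set Fperm 1 1 uv.1 uv.2 | uv in setX (Hinv gT) (Hinv gT)] :> {set _}.
  apply/setP => p; rewrite (BgrpE cM); apply/BsetP/imsetP.
    by case=> u [v [Hu Hv ->]]; exists (u, v) => //; apply/setXP.
  by case=> [[u v]] /setXP [Hu Hv] ->; exists u, v.
rewrite card_in_imset ?cardsX // => [[u v] [u' v']] _ _ /= e.
have ea := congr1 (fun q : {perm L} => (q (ka, 1)).2) e.
have eb := congr1 (fun q : {perm L} => (q (kb, 1)).2) e.
by move: ea eb; rewrite /= !FpermE /Fplus /= !perm1 !mul1g /alphaK /= => -> ->.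
Qed.

Lemma B_abelem : 2.-abelem (Bgrp gT).
Proof.
apply/abelemP => //; rewrite (BgrpE cM); split.
  apply/centsP => _ /BsetP [u [v [_ _ ->]]] _ /BsetP [u' [v' [_ _ ->]]].
  by rewrite /commute !(FpermM_B cM) (cM u) (cM v).
move=> _ /BsetP [u [v [Hu Hv ->]]].
by move: Hu Hv; rewrite expgS expg1 (FpermM_B cM) !HinvE => /eqP -> /eqP ->; rewrite Fperm1.
Qed.

Lemma iso_B n : #|Hinv gT| = (2 ^ n)%N -> Bgrp gT \isog [set: 'rV['Z_2]_(2 * n)].
Proof.
move=> cardH; have abelemZ2 : 2.-abelem [set: 'rV['Z_2]_(2 * n)].
  exact: (mxabelem.mx_Fp_abelem 1 (2 * n) (isT : prime 2)).
rewrite isog_sym (isog_abelem_card _ abelemZ2) B_abelem /= card_B cardH -expnD addnn -mul2n.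
by rewrite cardsT card_mx card_ord mul1n.
Qed.
End BIso.

(* Counting involutions: |H| = 2^s for M = C_(2i_1) x ... x C_(2i_s) x M_1,
   because the number of solutions of y^2 = 1 is multiplicative in direct
   products, equals 2 in a cyclic group of even order, and 1 in a group of
   odd order. *)
Section Involutions.
Variable gT : finGroupType.

Definition inv2 (G : {set gT}) := G :&: Hinv gT.

Lemma inv2P (G : {set gT}) y : reflect (y \in G /\ y ^+ 2 = 1) (y \in inv2 G).
Proof. by rewrite !inE; apply: (iffP andP) => -[-> /eqP]. Qed.

Lemma card_inv2_dprod (G H K : {group gT}) : H \x K = G ->
  #|inv2 G| = (#|inv2 H| * #|inv2 K|)%N.
Proof.
case/dprodP => _ <- cHK tiHK.
have sqM h k : h \in H -> k \in K -> (h * k) ^+ 2 = h ^+ 2 * k ^+ 2.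
  by move=> Hh Kk; apply/expgMn/esym/(centsP cHK).
have -> : inv2 (H * K) = [set hk.1 * hk.2 | hk in setX (inv2 H) (inv2 K)].
  apply/setP => y; apply/inv2P/imsetP => [[/mulsgP [h k Hh Kk ->]] | ].
    rewrite sqM // => hk2.
    have h2 : h ^+ 2 = 1.
      apply/set1gP; rewrite -tiHK inE groupX //= -(mulgK (k ^+ 2) (h ^+ 2)) hk2 mul1g.
      by rewrite groupV groupX.
    exists (h, k) => //; apply/setXP; split; apply/inv2P => //.
    by split=> //; move: hk2; rewrite h2 mul1g.
  case=> [[h k]] /setXP [/inv2P [Hh h2] /inv2P [Kk k2]] ->.
  by rewrite mem_mulg // sqM // h2 k2 mulg1.
rewrite card_in_imset ?cardsX // => [[h k] [h' k']] /setXP [/inv2P [Hh _] /inv2P [Kk _]].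
move=> /setXP [/inv2P [Hh' _] /inv2P [Kk' _]] /= e.
have : h'^-1 * h \in H :&: K.
  by rewrite inE groupM ?groupV //= -[h](mulgK k) e -mulgA mulKg groupM ?groupV.
rewrite tiHK => /set1gP /eqP; rewrite -eq_mulVg1 => /eqP eh.
by move: e; rewrite eh => /mulgI ->.
Qed.

Lemma card_inv2_cycle (a : gT) : ~~ odd #[a] -> #|inv2 <[a]>| = 2.
Proof.
move=> ev; set k := #[a] %/ 2.
have ak2 : #[a] = (k * 2)%N by rewrite divnK // dvdn2.
have k_gt0 : (0 < k)%N by move: (order_gt0 a); rewrite ak2 muln_gt0 => /andP [].
have -> : inv2 <[a]> = <[a ^+ k]>.
  apply/setP => y; apply/inv2P/idP => [[/cycleP [i ->] /eqP] | /cycleP [j ->]].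
    rewrite -expgM -order_dvdn ak2 dvdn_pmul2r // => /dvdnP [j ->].
    by rewrite mulnC expgM mem_cycle.
  split; first by rewrite -expgM mem_cycle.
  by rewrite -!expgM mulnCA -ak2 mulnC expgM expg_order expg1n.
by rewrite -orderE orderXdiv ?ak2 ?dvdn_mulr // mulKn.
Qed.

Lemma card_inv2_odd (G : {group gT}) : odd #|G| -> #|inv2 G| = 1%N.
Proof.
move=> oddG; rewrite -(cards1 (1 : gT)); apply: eq_card => y; rewrite inE.
apply/inv2P/eqP => [[Gy /eqP y2] | ->]; last by rewrite group1 expg1n.
have cop2 : coprime 2 #|G| by rewrite coprime2n.
apply/eqP; rewrite -order_eq1 -dvdn1 -(eqnP cop2).
by rewrite dvdn_gcd order_dvdG // order_dvdn y2.
Qed.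

Lemma card_inv2_bigdprod n (x : 'I_n -> gT) (G : {group gT}) :
  (forall j, ~~ odd #[x j]) -> \big[dprod/1]_(j < n) <[x j]> = G ->
  #|inv2 G| = (2 ^ n)%N.
Proof.
elim: n x G => [|n IH] x G evx.
  by rewrite big_ord0 => <-; rewrite card_inv2_odd ?cards1.
rewrite big_ord_recr /= => eG; case/dprodP: (eG) => [[Q C eQ eC] _ _ _].
rewrite eQ eC in eG; rewrite (card_inv2_dprod eG) -eC card_inv2_cycle // expnS mulnC.
by congr (_ * _)%N; apply: (IH (fun i => x (widen_ord (leqnSn n) i))).
Qed.
End Involutions.

Lemma exponent_gt2_sq (T : finGroupType) :
  2 < exponent [set: T] -> exists z : T, z * z != 1.
Proof.
move=> e2; apply/existsP; apply: contraLR e2 => /existsPn sq1; rewrite -leqNgt.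
apply/dvdn_leq => //; apply/exponentP => y _.
by rewrite expgS expg1; apply/eqP/negbNE/sq1.
Qed.

Theorem theorem5p9 (gT : finGroupType) (s : nat) (x : 'I_s -> gT) (M1 : {group gT}) :
  abelian [set: gT] ->
  2 < exponent [set: gT] ->
  ~~ odd #|gT| ->
  (1 <= s)%N ->
  (forall j, ~~ odd #[x j]) ->
  odd #|M1| ->
  \big[dprod/1]_(j < s) <[x j]> \x M1 = [set: gT] ->
  exists nBA : {acts Agrp gT, on group Bgrp gT | 'J},
    [/\ AutL gT \isog [set: sdprod_by (actby_groupAction nBA)],
        HalfL gT \isog setX [set: 'Z_2] [set: sdprod_by (actby_groupAction nBA)],
        Agrp gT \isog setX [set: {perm 'I_3}] (Aut [set: gT])
      & Bgrp gT \isog [set: 'rV['Z_2]_(2 * s)]].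
Proof.
move=> abM e2 _ _ evx oddM1 defM.
have cM (a b : gT) : a * b = b * a by apply: (centsP abM); rewrite inE.
have [z zz_neq1] := exponent_gt2_sq e2.
exists (nBA cM); split; [exact: iso_AutL zz_neq1 | exact: iso_HalfL zz_neq1 | exact: iso_A |].
apply: (iso_B cM); have -> : Hinv gT = inv2 [set: gT] by rewrite /inv2 setTI.
case/dprodP: (defM) => [[Q C defQ eC] _ _ _]; rewrite defQ in defM.
by rewrite (card_inv2_dprod defM) (card_inv2_bigdprod evx defQ) card_inv2_odd ?muln1.
Qed.
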